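(* Let $n=p$, $X=I_n$, and let $\lambda=\lambda_n>0$ satisfy $\sqrt n/\lambda_n\to\infty$. Then there exists $\delta>0$ such that, as $n\to\infty$, \[ \mathbb E_{\beta^0=0}\,\Pi^{\mathrm{LASSO}}_{\lambda_n}\Big(\beta:\|\beta\|_2\le\delta\sqrt n\Big(\frac1{\lambda_n}\wedge1\Big)\ \Big|\ Y\Big)\to0. \]
   Context: Sequence model: $Y=\beta+\varepsilon$ with $\beta\in\mathbb R^n$ and $\varepsilon\sim N_n(0,I_n)$; $\mathbb E_{\beta^0=0}$ denotes expectation when $Y\sim N_n(0,I_n)$. $\Pi^{\mathrm{LASSO}}_\lambda(\cdot\mid Y)$ is the posterior distribution for the prior under which $\beta_1,\dots,\beta_n$ are i.i.d. with Laplace density $x\mapsto\frac\lambda2e^{-\lambda|x|}$, i.e. $\Pi^{\mathrm{LASSO}}_\lambda(B\mid Y)\propto\int_Be^{-\|Y-\beta\|_2^2/2-\lambda\|\beta\|_1}d\beta$ (whose mode is the LASSO estimator). *)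

From HB Require Import structures.
From mathcomp Require Import all_boot all_order all_algebra.
From mathcomp Require Import all_classical all_reals all_analysis.
Set Implicit Arguments. Unset Strict Implicit. Unset Printing Implicit Defensive.
Import Order.TTheory GRing.Theory Num.Theory.
Import numFieldNormedType.Exports.
Local Open Scope ring_scope.

Section Defs.
Variable R : realType.

Definition norm2 n (b : 'rV[R]_n) : R := Num.sqrt (\sum_(i < n) b 0 i ^+ 2).
Definition norm1 n (b : 'rV[R]_n) : R := \sum_(i < n) `|b 0 i|.

(* Lebesgue integral over R^n of a nonnegative extended-real function,
   computed as the iterated one-dimensional Lebesgue integral
   (equal to the integral w.r.t. n-dim Lebesgue measure by Tonelli). *)
Fixpoint intRn (n : nat) : ('rV[R]_n -> \bar R) -> \bar R :=
  match n with
  | 0 => fun f => f 0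
  | m.+1 => fun f =>
      (\int[@lebesgue_measure R]_x intRn (fun v : 'rV[R]_m =>
           f (row_mx (\row_(i < 1) x) v)))%E
  end.

(* unnormalised LASSO posterior density (Gaussian likelihood x Laplace prior) *)
Definition lasso_kernel n (lam : R) (Y b : 'rV[R]_n) : R :=
  expR (- (norm2 (Y - b)) ^+ 2 / 2 - lam * norm1 b).

Definition lasso_post n (lam : R) (Y : 'rV[R]_n) (B : set 'rV[R]_n) : \bar R :=
  (intRn (fun b => (\1_B b * lasso_kernel lam Y b)%:E) *
   (fine (intRn (fun b => (lasso_kernel lam Y b)%:E)))^-1%:E)%E.

Definition gauss_pdf n (y : 'rV[R]_n) : R :=
  (Num.sqrt (2 * pi)) ^- n * expR (- (norm2 y) ^+ 2 / 2).

Definition E0 n (g : 'rV[R]_n -> \bar R) : \bar R :=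
  intRn (fun y => ((gauss_pdf y)%:E * g y)%E).

End Defs.

From HB Require Import structures.
From mathcomp Require Import all_boot all_order all_algebra.
From mathcomp Require Import all_classical all_reals all_analysis.
From mathcomp Require Import ring lra measurable_realfun normal_distribution.
Import Order.TTheory GRing.Theory Num.Theory.
Import numFieldNormedType.Exports.
Local Open Scope classical_set_scope.
Local Open Scope ring_scope.

(* The bound holds for every [lam > 0], deterministically in [Y].  The LASSO posterior is a product of
   one-dimensional laws with densities [k(b) = exp (-(y - b)^2/2 - lam |b|)].
   On the scale [a = (1/lam /\ 1)/4] each of them satisfies
   [int exp (-36 b^2/a^2) k <= 9/10 int k]: with a cutoff [u] equal to 1 on
   [[-a/2, a/2]] and to 0 outside [(-a, a)] one has [exp (-36 b^2/a^2) <= u + 1/10],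
   and translating [u] by [2a] towards [y] gives a function with support disjoint
   from that of [u] whose [k]-mass is at least a quarter of that of [u], so
   [int u k <= 4/5 int k].  Bounding the indicator of the ball of radius [r] by
   [exp (t (r^2 - |b|^2))] and multiplying over coordinates gives
   [Pi (|b| <= r | Y) <= exp (36 r^2/a^2) (9/10)^n], which for
   [r = 4 a sqrt n / 108] is [(e^(4/81) 9/10)^n], exponentially small. *)

Section row_mx_const.
Context {R : Type}.

Lemma row_mx_const_ord0 n (x : R) (v : 'rV[R]_n) :
  (row_mx (\row_(i < 1) x) v : 'rV_(n.+1)) 0 ord0 = x.
Proof.
have -> : (ord0 : 'I_(1 + n)) = lshift n ord0 by apply: val_inj.
by have := row_mxEl (\row_(i < 1) x) v 0 ord0; rewrite mxE.
Qed.

Lemma row_mx_const_lift n (x : R) (v : 'rV[R]_n) i :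
  (row_mx (\row_(i < 1) x) v : 'rV_(n.+1)) 0 (lift ord0 i) = v 0 i.
Proof.
have -> : (lift ord0 i : 'I_(1 + n)) = rshift 1 i by apply: val_inj.
exact: row_mxEr.
Qed.

End row_mx_const.

Section iterated_integral.
Context {R : realType}.
Local Notation mu := (@lebesgue_measure R).
Local Open Scope ereal_scope.

(* No measurability is needed: the integral of a nonnegative function is the
   supremum of the integrals of the simple functions below it. *)
Lemma ge0_le_integralT (f g : R -> \bar R) :
  (forall x, 0 <= f x) -> (forall x, f x <= g x) ->
  \int[mu]_x f x <= \int[mu]_x g x.
Proof.
move=> f0 fg; have g0 x : 0 <= g x := le_trans (f0 x) (fg x).
rewrite !ge0_integralTE //; apply: ge_ereal_sup => _ [h /= hf <-].
by apply: ereal_sup_ubound; exists h => //= x; exact: le_trans (hf x) (fg x).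
Qed.

Lemma intRn_ge0 n (f : 'rV[R]_n -> \bar R) :
  (forall x, 0 <= f x) -> 0 <= intRn f.
Proof.
elim: n f => [|n IH] f f0 /=; first exact: f0.
by apply: integral_ge0 => x _; apply: IH => v; exact: f0.
Qed.

Lemma le_intRn n (f g : 'rV[R]_n -> \bar R) :
  (forall x, 0 <= f x) -> (forall x, f x <= g x) -> intRn f <= intRn g.
Proof.
elim: n f g => [|n IH] f g f0 fg /=; first exact: fg.
apply: ge0_le_integralT => x; first by apply: intRn_ge0 => v; exact: f0.
by apply: IH => v; [exact: f0 | exact: fg].
Qed.

Lemma intRn_prod n (c : R) (g : 'I_n -> R -> R) :
  (0 <= c)%R -> (forall i x, 0 <= g i x)%R ->
  (forall i, measurable_fun setT (g i)) ->
  intRn (fun v : 'rV[R]_n => (c * \prod_i g i (v 0 i))%:E) =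
  c%:E * \prod_i \int[mu]_x (g i x)%:E.
Proof.
elim: n c g => [|n IH] c g c0 g0 mg /=; first by rewrite !big_ord0 mulr1 mule1.
transitivity (\int[mu]_x ((c * g ord0 x)%:E *
    \prod_(i < n) \int[mu]_y (g (lift ord0 i) y)%:E)).
  apply: eq_integral => x _; rewrite -IH ?mulr_ge0 //.
  congr intRn; apply/funext => v; rewrite big_ord_recl mulrA row_mx_const_ord0.
  by congr (_ * _)%:E; apply: eq_bigr => i _; rewrite row_mx_const_lift.
rewrite ge0_integralZr //; last 3 first.
- by apply/measurable_EFinP; apply: measurable_funM => //; exact: mg.
- by move=> x _; rewrite lee_fin mulr_ge0.
- by apply: prode_ge0 => i _; apply: integral_ge0 => x _; rewrite lee_fin.
rewrite big_ord_recl muleA; congr (_ * _).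
under eq_integral do rewrite EFinM.
rewrite ge0_integralZl_EFin //.
  by move=> x _; rewrite lee_fin.
by apply/measurable_EFinP; exact: mg.
Qed.

Lemma ge0_integral_shift (G : R -> R) (d : R) :
  continuous G -> (forall x, 0 <= G x)%R ->
  \int[mu]_x (G x)%:E = \int[mu]_x (G (x + d)%R)%:E.
Proof.
move=> cG G0.
have dshift : derive1 (fun z : R => z + d)%R = cst 1%R.
  apply/funext => x; rewrite derive1E.
  by apply: derive_val; exact: is_derive_shift.
rewrite (@increasing_ge0_integration_by_substitutionT R (fun z : R => z + d)%R G) //.
- by apply: eq_integral => x _; rewrite dshift /= mulr1.
- by move=> x y xy; rewrite /= ltrD2r.
- by rewrite dshift; exact: cst_continuous.
- by rewrite dshift; exact: is_cvg_cst.
- by rewrite dshift; exact: is_cvg_cst.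
- exact: cvg_addrr_Ny.
- exact: cvg_addrr.
Qed.

End iterated_integral.

Section cutoff.
Context {R : realType}.

Definition cutoff (a b : R) : R := Num.min 1 (Num.max 0 (2 - 2 * `|b| / a)).

Lemma cutoff_ge0 a b : 0 <= cutoff a b.
Proof. by rewrite /cutoff le_min ler01 le_max lexx. Qed.

Lemma cutoff_le1 a b : cutoff a b <= 1.
Proof. by rewrite /cutoff ge_min lexx. Qed.

Lemma cutoff_eq0 a b : 0 < a -> a <= `|b| -> cutoff a b = 0.
Proof.
move=> a0 ab; have : 1 <= `|b| / a by rewrite ler_pdivlMr // mul1r.
by rewrite /cutoff -mulrA => h; rewrite max_l ?min_r //; lra.
Qed.

Lemma cutoff_eq1 a b : 0 < a -> `|b| <= a / 2 -> cutoff a b = 1.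
Proof.
move=> a0 ab; have : `|b| / a <= 1 / 2 by rewrite ler_pdivrMr // mulrAC mul1r.
by rewrite /cutoff -mulrA => h; rewrite max_r ?min_l //; lra.
Qed.

Lemma continuous_cutoff a : continuous (cutoff a).
Proof.
move=> x; apply: (@continuous_min _ _ (cst 1) (fun b => Num.max 0 (2 - 2 * `|b| / a))).
  exact: cvg_cst.
apply: (@continuous_max _ _ (cst 0) (fun b => 2 - 2 * `|b| / a)); first exact: cvg_cst.
apply: cvgB; first exact: cvg_cst.
by apply: cvgM; [apply: cvgM; [exact: cvg_cst | exact: cvg_norm] | exact: cvg_cst].
Qed.

Lemma expR_sqr_le_cutoff (a b : R) : 0 < a ->
  expR (- (36 / a ^+ 2) * b ^+ 2) <= cutoff a b + 1 / 10.
Proof.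
move=> a0; have [hb|hb] := lerP `|b| (a / 2).
  rewrite cutoff_eq1 //; suff : expR (- (36 / a ^+ 2) * b ^+ 2) <= 1 by lra.
  by rewrite -expR0 ler_expR mulNr oppr_le0 mulr_ge0 ?sqr_ge0 ?divr_ge0 ?sqr_ge0 ?ltW.
have e9 : expR (-9 : R) <= 1 / 10.
  have : 10 <= expR (9 : R) by have := @expR_ge1Dx R 9; lra.
  rewrite expRN => h; rewrite ler_pdivlMr ?expR_gt0 // ler_pdivrMl //; lra.
have : (a / 2) ^+ 2 <= b ^+ 2.
  by rewrite -[b ^+ 2]real_normK ?num_real // lerXn2r ?nnegrE ?normr_ge0 //; lra.
move=> ab2; have b9 : 9 <= 36 / a ^+ 2 * b ^+ 2.
  by rewrite mulrAC ler_pdivlMr ?exprn_gt0 //; lra.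
have := cutoff_ge0 a b; suff : expR (- (36 / a ^+ 2) * b ^+ 2) <= 1 / 10 by lra.
by apply: le_trans e9; rewrite ler_expR mulNr lerN2.
Qed.

End cutoff.

Section lasso_kernel1.
Context {R : realType}.
Local Notation mu := (@lebesgue_measure R).

Definition lasso_kernel1 (lam y b : R) : R :=
  expR (- (y - b) ^+ 2 / 2 - lam * `|b|).

Lemma lasso_kernel1_ge0 lam y b : 0 <= lasso_kernel1 lam y b.
Proof. exact: expR_ge0. Qed.

Lemma continuous_lasso_kernel1 lam y : continuous (lasso_kernel1 lam y).
Proof.
move=> x; apply: continuous_comp; last exact: continuous_expR.
apply: cvgB; last by apply: cvgM; [exact: cvg_cst | exact: cvg_norm].
apply: cvgM; last exact: cvg_cst.
apply: cvgN; apply: (@continuous_comp _ _ _ (fun b => y - b) (fun z => z ^+ 2)).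
  by apply: cvgB; [exact: cvg_cst | exact: cvg_id].
exact: exprn_continuous.
Qed.

(* The exponent drops by at most [4 a^2 + 2 a lam <= 3/4], and [exp (-3/4) >= 1/4]. *)
Lemma lasso_kernel1_shift_ge (lam y a b d : R) :
  0 <= lam -> a <= 1/4 -> a * lam <= 1/4 ->
  `|d| = 2 * a -> 0 <= d * y -> `|b| < a ->
  lasso_kernel1 lam y b / 4 <= lasso_kernel1 lam y (b + d).
Proof.
move=> l0 a4 al hd dy hb.
have a0 : 0 <= a by have := normr_ge0 d; rewrite hd; lra.
have db : d * b <= 2 * a * a.
  apply: le_trans (ler_norm _) _; rewrite normrM hd.
  by apply: ler_wpM2l; [lra | exact: ltW].
have dd : d ^+ 2 = 4 * a ^+ 2 by rewrite -[d ^+ 2]real_normK ?num_real // hd; ring.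
have lbd : lam * `|b + d| <= lam * `|b| + 2 * (a * lam).
  apply: le_trans (ler_wpM2l l0 (ler_normD b d)) _; rewrite hd; lra.
have exponent_ge : - (y - b) ^+ 2 / 2 - lam * `|b| - 3/4 <=
                   - (y - (b + d)) ^+ 2 / 2 - lam * `|b + d|.
  have aa : a ^+ 2 <= 1/16 by rewrite expr2; nra.
  have -> : - (y - (b + d)) ^+ 2 / 2 = - (y - b) ^+ 2 / 2 + d * y - d * b - d ^+ 2 / 2.
    by field.
  rewrite dd; lra.
have quarter_le x : expR x / 4 <= expR (x - 3/4) :> R.
  by rewrite expRD; have := @expR_ge1Dx R (- (3/4)); have := expR_ge0 x; nra.
by apply: le_trans (quarter_le _) _; rewrite ler_expR.
Qed.

Lemma exists_shift_toward (y s : R) : 0 <= s -> exists d, `|d| = s /\ 0 <= d * y.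
Proof.
move=> s0; have [y0|y0] := lerP 0 y.
  by exists s; rewrite ger0_norm // mulr_ge0.
by exists (- s); rewrite normrN ger0_norm // mulNr -mulrN mulr_ge0 // oppr_ge0 ltW.
Qed.

Lemma cutoff_add_shift_le1 (a b d : R) : 0 < a -> `|d| = 2 * a ->
  cutoff a b + cutoff a (b - d) <= 1.
Proof.
move=> a0 hd; have [ab|ab] := lerP a `|b|; first by rewrite cutoff_eq0 // add0r cutoff_le1.
rewrite (@cutoff_eq0 _ a (b - d)) // ?addr0 ?cutoff_le1 //.
have := ler_normD b (d - b); rewrite addrC subrK distrC; lra.
Qed.

Lemma cutoff_lasso_kernel1_shift_ge (lam y a b d : R) :
  0 < a -> a <= 1/4 -> 0 <= lam -> a * lam <= 1/4 ->
  `|d| = 2 * a -> 0 <= d * y ->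
  cutoff a b * lasso_kernel1 lam y b / 4 <= cutoff a b * lasso_kernel1 lam y (b + d).
Proof.
move=> a0 a4 l0 al hd dy; have [ab|ab] := lerP a `|b|.
  by rewrite cutoff_eq0 // !mul0r.
have := lasso_kernel1_shift_ge lam y a b d l0 a4 al hd dy ab.
by rewrite -mulrA; apply: ler_wpM2l; exact: cutoff_ge0.
Qed.

Local Open Scope ereal_scope.

Lemma integral_cutoff_lasso_kernel1_le (lam y a : R) :
  (0 < a)%R -> (a <= 1/4)%R -> (0 <= lam)%R -> (a * lam <= 1/4)%R ->
  \int[mu]_b (cutoff a b * lasso_kernel1 lam y b)%:E <=
  (4/5)%R%:E * \int[mu]_b (lasso_kernel1 lam y b)%:E.
Proof.
move=> a0 a4 l0 al.
have [d [hd dy]] : exists d, (`|d| = 2 * a /\ 0 <= d * y)%R.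
  by apply: exists_shift_toward; lra.
set k := lasso_kernel1 lam y.
have k0 x : (0 <= k x)%R := lasso_kernel1_ge0 lam y x.
have ck : continuous k := continuous_lasso_kernel1 lam y.
have cu : continuous (fun b => cutoff a (b - d)).
  move=> x; apply: (@continuous_comp _ _ _ (fun b => b - d)%R (cutoff a)).
    by apply: cvgB; [exact: cvg_id | exact: cvg_cst].
  exact: continuous_cutoff.
have mk := continuous_measurable_fun ck.
have muk : measurable_fun setT (fun b => cutoff a b * k b)%R.
  by apply: measurable_funM => //; exact: continuous_measurable_fun (continuous_cutoff a).
set I := \int[mu]_b (k b)%:E; set J := \int[mu]_b (cutoff a b * k b)%:E.
have J0 : 0 <= J by apply: integral_ge0 => x _; rewrite lee_fin mulr_ge0 ?cutoff_ge0.
have disjoint : J + \int[mu]_b (cutoff a (b - d) * k b)%:E <= I.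
  rewrite -ge0_integralD //; last 4 first.
  - by move=> x _; rewrite lee_fin mulr_ge0 ?cutoff_ge0.
  - exact/measurable_EFinP.
  - by move=> x _; rewrite lee_fin mulr_ge0 ?cutoff_ge0.
  - by apply/measurable_EFinP; apply: measurable_funM => //; exact: continuous_measurable_fun.
  apply: ge0_le_integralT => x.
    by rewrite adde_ge0 // lee_fin mulr_ge0 ?cutoff_ge0.
  rewrite -EFinD lee_fin -mulrDl -[leRHS]mul1r.
  by apply: ler_wpM2r => //; exact: cutoff_add_shift_le1.
have shifted : (1/4)%R%:E * J <= \int[mu]_b (cutoff a (b - d) * k b)%:E.
  rewrite (@ge0_integral_shift _ (fun b => cutoff a (b - d) * k b)%R d); first last.
  - by move=> x; rewrite mulr_ge0 ?cutoff_ge0.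
  - by move=> x; apply: cvgM; [exact: cu | exact: ck].
  under [X in _ <= X]eq_integral do rewrite addrK.
  rewrite /J -ge0_integralZl_EFin //; last 2 first.
  - by move=> x _; rewrite lee_fin mulr_ge0 ?cutoff_ge0.
  - exact/measurable_EFinP.
  apply: ge0_le_integralT => x; rewrite -EFinM lee_fin.
    by rewrite !mulr_ge0 ?cutoff_ge0.
  rewrite mulrC mul1r; exact: (cutoff_lasso_kernel1_shift_ge lam y a x d).
have : (5/4)%R%:E * J <= I.
  apply: le_trans disjoint; apply: le_trans (leeD2l J shifted).
  by rewrite (_ : 5/4 = 1 + 1/4)%R ?EFinD ?ge0_muleDl ?mul1e //; lra.
move=> /(lee_wpmul2l (_ : 0 <= (4/5)%R%:E)); rewrite muleA -EFinM.
by rewrite (_ : 4/5 * (5/4) = 1)%R ?mul1e //; [apply; rewrite lee_fin | field].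
Qed.

Lemma integral_gauss_lasso_kernel1_le (lam y a : R) :
  (0 < a)%R -> (a <= 1/4)%R -> (0 <= lam)%R -> (a * lam <= 1/4)%R ->
  \int[mu]_b (expR (- (36 / a ^+ 2) * b ^+ 2) * lasso_kernel1 lam y b)%:E <=
  (9/10)%R%:E * \int[mu]_b (lasso_kernel1 lam y b)%:E.
Proof.
move=> a0 a4 l0 al; set k := lasso_kernel1 lam y.
have k0 x : (0 <= k x)%R := lasso_kernel1_ge0 lam y x.
have mk := continuous_measurable_fun (continuous_lasso_kernel1 lam y).
have muk : measurable_fun setT (fun b => cutoff a b * k b)%R.
  by apply: measurable_funM => //; exact: continuous_measurable_fun (continuous_cutoff a).
apply: le_trans (_ : \int[mu]_b ((cutoff a b * k b)%:E + (1/10 * k b)%R%:E) <= _).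
  apply: ge0_le_integralT => x; first by rewrite lee_fin mulr_ge0 ?expR_ge0.
  rewrite -EFinD lee_fin -mulrDl; apply: ler_wpM2r => //.
  exact: expR_sqr_le_cutoff.
rewrite ge0_integralD //; last 4 first.
- by move=> x _; rewrite lee_fin mulr_ge0 ?cutoff_ge0.
- exact/measurable_EFinP.
- by move=> x _; rewrite lee_fin mulr_ge0.
- by apply/measurable_EFinP; apply: measurable_funM.
under [X in _ + X]eq_integral do rewrite EFinM.
rewrite ge0_integralZl_EFin //; last 2 first.
- by move=> x _; rewrite lee_fin.
- exact/measurable_EFinP.
apply: le_trans (leeD2r _ (integral_cutoff_lasso_kernel1_le lam y a a0 a4 l0 al)) _.
by rewrite -ge0_muleDl ?lee_fin // -EFinD (_ : 4/5 + 1/10 = 9/10)%R //; field.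
Qed.

End lasso_kernel1.

Section lasso_posterior.
Context {R : realType}.
Local Notation mu := (@lebesgue_measure R).

Lemma norm2_sqr n (b : 'rV[R]_n) : norm2 b ^+ 2 = \sum_(i < n) b 0 i ^+ 2.
Proof. by rewrite /norm2 sqr_sqrtr // sumr_ge0 // => i _; exact: sqr_ge0. Qed.

Lemma lasso_kernel_prod n (lam : R) (Y b : 'rV[R]_n) :
  lasso_kernel lam Y b = \prod_i lasso_kernel1 lam (Y 0 i) (b 0 i).
Proof.
rewrite /lasso_kernel /lasso_kernel1 -expR_sum norm2_sqr /norm1; congr expR.
rewrite mulr_sumr -sumrN mulr_suml -sumrB; apply: eq_bigr => i _.
by rewrite !mxE mulNr.
Qed.

Lemma indicator_ball_le n (t r : R) (b : 'rV[R]_n) : 0 <= t ->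
  \1_[set b | norm2 b <= r] b <= expR (t * r ^+ 2) * \prod_i expR (- t * b 0 i ^+ 2).
Proof.
move=> t0; rewrite indicE -expR_sum -expRD.
have [/set_mem br|_] := boolP (b \in [set b | norm2 b <= r]); last exact: expR_ge0.
rewrite -expR0 ler_expR -mulr_sumr mulNr -mulrBr mulr_ge0 // subr_ge0 -norm2_sqr.
by rewrite lerXn2r ?nnegrE ?sqrtr_ge0 // (le_trans (sqrtr_ge0 _) br).
Qed.

Local Open Scope ereal_scope.

Lemma lee_prod n (f g : 'I_n -> \bar R) :
  (forall i, 0 <= f i) -> (forall i, f i <= g i) -> \prod_i f i <= \prod_i g i.
Proof.
move=> f0 fg; suff [] : 0 <= \prod_i f i /\ \prod_i f i <= \prod_i g i by [].
apply: (big_ind2 (fun x y => 0 <= x /\ x <= y)) => // x1 x2 y1 y2 [? ?] [? ?].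
by split; [exact: mule_ge0 | exact: lee_pmul].
Qed.

(* If the normalising constant is 0 or infinite, [fine] and [^-1] make the
   posterior 0. *)
Lemma lasso_post_le n (lam C : R) (Y : 'rV[R]_n) (B : set 'rV[R]_n) : (0 <= C)%R ->
  intRn (fun b => (\1_B b * lasso_kernel lam Y b)%:E) <=
    C%:E * intRn (fun b => (lasso_kernel lam Y b)%:E) ->
  lasso_post lam Y B <= C%:E.
Proof.
rewrite /lasso_post; set A := intRn _; set K := intRn _ => C0 AK.
have K0 : 0 <= K by apply: intRn_ge0 => b; rewrite lee_fin expR_ge0.
move: A K AK K0 => A [k| |] AK K0 /=; rewrite ?invr0 ?mule0 ?lee_fin //.
have [->|k_neq0] := eqVneq k 0%R; first by rewrite invr0 mule0 lee_fin.
have k_gt0 : (0 < k)%R by rewrite lt_def k_neq0 -lee_fin.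
apply: le_trans (lee_wpmul2r _ AK) _; first by rewrite lee_fin invr_ge0 ltW.
by rewrite -!EFinM mulfK.
Qed.

Lemma lasso_post_ball_le n (lam a r : R) (Y : 'rV[R]_n) :
  (0 < a)%R -> (a <= 1/4)%R -> (0 <= lam)%R -> (a * lam <= 1/4)%R ->
  lasso_post lam Y [set b | (norm2 b <= r)%R] <=
  (expR (36 / a ^+ 2 * r ^+ 2) * (9/10) ^+ n)%:E.
Proof.
move=> a0 a4 l0 al; set t := (36 / a ^+ 2)%R.
have t0 : (0 <= t)%R by rewrite divr_ge0 // sqr_ge0.
have k0 y b : (0 <= lasso_kernel1 lam y b)%R := lasso_kernel1_ge0 lam y b.
have mk y := continuous_measurable_fun (continuous_lasso_kernel1 lam y).
apply: lasso_post_le; first by rewrite mulr_ge0 ?expR_ge0 ?exprn_ge0.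
apply: le_trans (_ : intRn (fun b : 'rV[R]_n => (expR (t * r ^+ 2) *
    \prod_i (expR (- t * b 0 i ^+ 2) * lasso_kernel1 lam (Y 0%R i) (b 0 i)))%R%:E) <= _).
  apply: le_intRn => b; first by rewrite lee_fin mulr_ge0 ?expR_ge0 // indicE ler0n.
  rewrite lee_fin lasso_kernel_prod big_split /= mulrA.
  by apply: ler_wpM2r; [exact: prodr_ge0 | exact: indicator_ball_le].
rewrite (@intRn_prod _ n _ (fun i x => expR (- t * x ^+ 2) * lasso_kernel1 lam (Y 0%R i) x)%R)
  ?expR_ge0 //; last 2 first.
- by move=> i x; rewrite mulr_ge0 ?expR_ge0.
- move=> i; apply: measurable_funM => //.
  apply: continuous_measurable_fun => x; apply: continuous_comp; last exact: continuous_expR.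
  by apply: cvgM; [exact: cvg_cst | exact: exprn_continuous].
have -> : (fun b => (lasso_kernel lam Y b)%:E) =
          (fun b : 'rV[R]_n => (1 * \prod_i lasso_kernel1 lam (Y 0%R i) (b 0 i))%R%:E).
  by apply/funext => b; rewrite lasso_kernel_prod mul1r.
rewrite (@intRn_prod _ n _ (fun i => lasso_kernel1 lam (Y 0%R i))) // mul1e EFinM -muleA.
apply: lee_wpmul2l; first by rewrite lee_fin expR_ge0.
have -> : ((9/10) ^+ n)%:E * \prod_i \int[mu]_x (lasso_kernel1 lam (Y 0%R i) x)%:E =
          \prod_i ((9/10)%:E * \int[mu]_x (lasso_kernel1 lam (Y 0%R i) x)%:E).
  by rewrite big_split /= prodEFin prodr_const card_ord.
apply: lee_prod => i; last exact: integral_gauss_lasso_kernel1_le.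
by apply: integral_ge0 => x _; rewrite lee_fin mulr_ge0 ?expR_ge0.
Qed.

End lasso_posterior.

Section gaussian_expectation.
Context {R : realType}.
Local Notation mu := (@lebesgue_measure R).

Lemma gauss_pdf_prod n (y : 'rV[R]_n) : gauss_pdf y = \prod_i normal_pdf 0 1 (y 0 i).
Proof.
rewrite /gauss_pdf norm2_sqr.
under eq_bigr do rewrite normal_pdfE ?oner_neq0 //.
rewrite big_split /= prodr_const card_ord -expR_sum; congr (_ * _).
  by rewrite /normal_peak expr1n mul1r mulr2n -mulr2n -mulr_natl exprVn.
congr expR; rewrite mulNr mulr_suml -sumrN; apply: eq_bigr => i _.
by rewrite /normal_fun subr0 expr1n mulNr.
Qed.

Lemma gauss_pdf_ge0 n (y : 'rV[R]_n) : 0 <= gauss_pdf y.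
Proof. by rewrite gauss_pdf_prod prodr_ge0 // => i _; exact: normal_pdf_ge0. Qed.

Local Open Scope ereal_scope.

Lemma lasso_post_ge0 n (lam : R) (Y : 'rV[R]_n) B : 0 <= lasso_post lam Y B.
Proof.
rewrite /lasso_post; apply: mule_ge0.
  by apply: intRn_ge0 => b; rewrite lee_fin mulr_ge0 ?expR_ge0 // indicE ler0n.
by rewrite lee_fin invr_ge0 fine_ge0 //; apply: intRn_ge0 => b; rewrite lee_fin expR_ge0.
Qed.

Lemma E0_ge0 n (g : 'rV[R]_n -> \bar R) : (forall y, 0 <= g y) -> 0 <= E0 g.
Proof. by move=> g0; apply: intRn_ge0 => y; rewrite mule_ge0 ?lee_fin ?gauss_pdf_ge0. Qed.

Lemma E0_le n (g : 'rV[R]_n -> \bar R) (c : R) : (0 <= c)%R ->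
  (forall y, 0 <= g y <= c%:E) -> E0 g <= c%:E.
Proof.
move=> c0 g0c; apply: le_trans (_ : intRn (fun y : 'rV[R]_n =>
    (c * \prod_i normal_pdf 0 1 (y 0%R i))%R%:E) <= _).
  apply: le_intRn => y; have /andP[gy0 gyc] := g0c y.
    by rewrite mule_ge0 ?lee_fin ?gauss_pdf_ge0.
  rewrite -gauss_pdf_prod [leRHS]EFinM [leRHS]muleC.
  by apply: lee_wpmul2l; rewrite ?lee_fin ?gauss_pdf_ge0.
rewrite (@intRn_prod _ n c (fun i => normal_pdf 0 1)) //; last 2 first.
- by move=> i x; exact: normal_pdf_ge0.
- by move=> i; exact: measurable_normal_pdf.
rewrite (eq_bigr (fun _ => 1)) => [|i _]; last exact: integral_normal_pdf.
by rewrite big1_eq mule1.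
Qed.

End gaussian_expectation.

Lemma expR4_81_mul9_10_lt1 (R : realType) : expR (4/81 : R) * (9/10) < 1.
Proof.
have := @expR_ge1Dx R (- (4/81)); rewrite expRN => h.
have e0 : 0 < expR (4/81 : R) := expR_gt0 _.
have := ler_wpM2r (ltW e0) h; rewrite mulVf ?gt_eqF //; lra.
Qed.

Lemma lasso_post_small_ball_le (R : realType) n (lam : R) (Y : 'rV[R]_n) : 0 < lam ->
  (lasso_post lam Y
     [set b | (norm2 b <= 1/108 * Num.sqrt n%:R * Num.min lam^-1 1)%R] <=
   ((expR (4/81) * (9/10)) ^+ n)%:E)%E.
Proof.
move=> l0; set m := Num.min lam^-1 1.
have m0 : 0 < m by rewrite lt_min invr_gt0 l0 ltr01.
have ml : m * lam <= 1.
  by rewrite -ler_pdivlMr // div1r ge_min lexx.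
apply: le_trans (@lasso_post_ball_le R n lam (m / 4) _ Y _ _ (ltW l0) _) _.
- by rewrite divr_gt0.
- by rewrite ler_pM2r // ge_min lexx orbT.
- by rewrite mulrAC ler_pM2r.
rewrite lee_fin [leRHS]exprMn -expRM_natl ler_wpM2r ?exprn_ge0 // ler_expR.
rewrite !exprMn sqr_sqrtr ?ler0n // le_eqVlt; apply/orP; left; apply/eqP.
by field; rewrite gt_eqF.
Qed.

Theorem theorem7 (R : realType) (lam : nat -> R) :
  (forall n, 0 < lam n) ->
  (fun n : nat => Num.sqrt (n%:R) / lam n) @ \oo --> +oo ->
  exists2 delta : R, 0 < delta &
    (fun n : nat =>
       E0 (fun Y : 'rV[R]_n =>
         lasso_post (lam n) Y
           [set b : 'rV[R]_n | norm2 b <=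
              delta * Num.sqrt (n%:R) * Num.min (lam n)^-1 1]))
      @ \oo --> 0%E.
Proof.
move=> lam_gt0 _; exists (1/108) => //.
set q := expR (4/81 : R) * (9/10).
have q0 : 0 <= q by rewrite mulr_ge0 ?expR_ge0.
apply: (@squeeze_cvge _ _ _ _ (cst 0%E) _ (fun n => (q ^+ n)%:E)).
- apply: nearW => n; rewrite E0_ge0 /= => [|Y]; last exact: lasso_post_ge0.
  apply: E0_le; first exact: exprn_ge0.
  by move=> Y; rewrite lasso_post_ge0 lasso_post_small_ball_le.
- exact: cvg_cst.
- apply: cvg_EFin; first exact: nearW.
  by apply: cvg_expr; rewrite ger0_norm // expR4_81_mul9_10_lt1.
Qed.
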